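(* Let $m,n,p \in \mathbb{N}$. The symmetric Kronecker product $\underline{\otimes}$ (defined in the context) on rectangular matrices has the following properties. (a) (Symmetry) $A \,\underline{\otimes}\, B = B \,\underline{\otimes}\, A$ for all $A,B\in\mathbb{R}^{m\times n}$. (b) (Mixed vector product) $(A\,\underline{\otimes}\, B)\operatorname{svec}(\pi(C)) = \operatorname{svec}(\pi(B\,\pi(C)\,A^T))$ for all $A,B\in\mathbb{R}^{m\times n}$, $C\in\mathbb{R}^{n\times n}$. (c) (Transpose) $(A\,\underline{\otimes}\, B)^T = A^T\,\underline{\otimes}\, B^T$ for all $A,B\in\mathbb{R}^{m\times n}$. (d) (Mixed products) For $A,B\in\mathbb{R}^{m\times n}$ and $C,D\in\mathbb{R}^{n\times p}$: $(A\,\underline{\otimes}\, B)(C\,\underline{\otimes}\, D) = \tfrac12\left(AC\,\underline{\otimes}\, BD + AD\,\underline{\otimes}\, BC\right)$; in particular $(A\,\underline{\otimes}\, B)(C\,\underline{\otimes}\, C) = AC\,\underline{\otimes}\, BC$. Also, for $A,B\in\mathbb{R}^{m\times n}$ and $C\in\mathbb{R}^{p\times m}$: $(C\,\underline{\otimes}\, C)(A\,\underline{\otimes}\, B) = CA\,\underline{\otimes}\, CB$. (e) (Shared eigenvectors) Let $A,B\in\mathbb{R}^{n\times n}$ and let $x,y\in\mathbb{C}^n$ be nonzero with $Ax=\lambda_1x$, $Bx=\mu_1x$, $Ay=\lambda_2y$, $By=\mu_2y$. Then $x\,\underline{\otimes}\, y$ is an eigenvector of $A\,\underline{\otimes}\,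 B$ with eigenvalue $\tfrac12(\lambda_1\mu_2+\lambda_2\mu_1)$. (f) (Zero) For $A,B\in\mathbb{R}^{m\times n}$, $A\,\underline{\otimes}\, B = 0$ if and only if $A=0$ or $B=0$.
   Context: For $k \in \mathbb{N}$ let $\underline{k} = k(k+1)/2$, $\mathbb{S}^k$ the real symmetric $k\times k$ matrices, $\langle A,B\rangle_F=\operatorname{tr}(A^TB)$, $\operatorname{vec}$ column-stacking vectorization, $\otimes$ the standard Kronecker product, $e_1,\dots,e_k$ the standard basis of $\mathbb{R}^k$. Enumerate the pairs $(r,c)$, $1\le r\le c\le k$, in the order $(1,1),(1,2),\dots,(1,k),(2,2),\dots,(2,k),\dots,(k,k)$ as $(r(\ell),c(\ell))$, $\ell=1,\dots,\underline{k}$, and set $E_\ell = e_{r(\ell)}e_{r(\ell)}^T$ if $r(\ell)=c(\ell)$, $E_\ell=\frac{\sqrt2}{2}(e_{r(\ell)}e_{c(\ell)}^T+e_{c(\ell)}e_{r(\ell)}^T)$ if $r(\ell)<c(\ell)$. Let $W_k\in\mathbb{R}^{\underline{k}\times k^2}$ have $\ell$-th row $\operatorname{vec}(E_\ell)^T$. For $A,B\in\mathbb{R}^{m\times n}$ (or $\mathbb{C}^{m\times n}$, same formula) the symmetric Kronecker product is $A\,\underline{\otimes}\, B = W_m(A\otimes B)W_n^T\in\mathbb{R}^{\underline{m}\times\underline{n}}$; for column vectors $x,y\in\mathbb{C}^n$ this gives $x\,\underline{\otimes}\, y = W_n(x\otimes y)\in\mathbb{C}^{\underline{n}}$ (as $W_1=1$).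 $\operatorname{svec}:\mathbb{S}^n\to\mathbb{R}^{\underline n}$, $\operatorname{svec}(P) = W_n\operatorname{vec}(P) = (\langle P,E_1\rangle_F,\dots,\langle P,E_{\underline n}\rangle_F)^T$, and $\pi(A) = (A+A^T)/2$ for square $A$. *)

(* Real field: an arbitrary real closed field R (needed for sqrt 2);
   complex numbers: R[i] from mathcomp-real-closed. *)
From HB Require Import structures.
From mathcomp Require Import all_boot all_order all_algebra.
From mathcomp Require Import complex mxtens.
Set Implicit Arguments. Unset Strict Implicit. Unset Printing Implicit Defensive.
Import Order.TTheory GRing.Theory Num.Theory.
Local Open Scope ring_scope.

Definition tri (k : nat) : nat := (k * k.+1) %/ 2.

(* column-stacking vectorization: vec A has entry A i j at index j*m + i
   (0-based), i.e. vec A = (mxvec A^T)^T since mxvec is row-major. *)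
Definition vec {T : Type} {m n : nat} (A : 'M[T]_(m, n)) : 'cV[T]_(n * m) :=
  (mxvec A^T)^T.

Definition sym_pairs (k : nat) : seq (nat * nat) :=
  [seq (r, c) | r <- iota 0 k, c <- iota r (k - r)].

(* E_l (0-based l) *)
Definition Emat (R : rcfType) (k : nat) (l : nat) : 'M[R]_k :=
  let rc := nth (0%N, 0%N) (sym_pairs k) l in
  if rc.1 == rc.2 then
    \matrix_(a, b) (((a : nat) == rc.1) && ((b : nat) == rc.1))%:R
  else
    (Num.sqrt 2 / 2) *:
      \matrix_(a, b) ((((a : nat) == rc.1) && ((b : nat) == rc.2))%:R
                    + (((a : nat) == rc.2) && ((b : nat) == rc.1))%:R).

Definition Wmat (R : rcfType) (k : nat) : 'M[R]_(tri k, k * k) :=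
  \matrix_(l < tri k) (vec (Emat R k l))^T.

(* standard Kronecker product: tensmx from mathcomp-real-closed (mxtens.v),
   (A *t B) (i1*p+i2) (j1*q+j2) = A i1 j1 * B i2 j2. *)

Definition skron (R : rcfType) (m n : nat) (A B : 'M[R]_(m, n)) : 'M[R]_(tri m, tri n) :=
  Wmat R m *m (tensmx A B) *m (Wmat R n)^T.

Definition WmatC (R : rcfType) (k : nat) : 'M[R[i]]_(tri k, k * k) :=
  map_mx (real_complex R) (Wmat R k).

Definition skronC (R : rcfType) (m n : nat) (A B : 'M[R[i]]_(m, n))
  : 'M[R[i]]_(tri m, tri n) :=
  WmatC R m *m (tensmx A B) *m (WmatC R n)^T.

(* for column vectors x, y in C^n: x (sym-kron) y = W_n (x kron y)  (W_1 = 1) *)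
Definition svkronC (R : rcfType) (n : nat) (x y : 'cV[R[i]]_n) : 'cV[R[i]]_(tri n) :=
  WmatC R n *m (tensmx x y).

Definition svec (R : rcfType) (n : nat) (P : 'M[R]_n) : 'cV[R]_(tri n) :=
  Wmat R n *m vec P.

Definition symp (R : rcfType) (n : nat) (A : 'M[R]_n) : 'M[R]_n :=
  (1 / 2 : R) *: (A + A^T).

From mathcomp Require Import all_boot all_order all_algebra.
From mathcomp Require Import complex mxtens.
From mathcomp Require Import ring zify.
Set Implicit Arguments. Unset Strict Implicit. Unset Printing Implicit Defensive.
Import Order.TTheory GRing.Theory Num.Theory.
Local Open Scope ring_scope.

(* The rows of W_k are the vectorized members of an orthonormal basis (E_l)
   of the symmetric matrices.  Hence W_k vec X lists the coordinates of pi(X),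
   W_k^T u = vec(smat u) for the symmetric matrix smat u = sum_l u_l E_l, and
   W_k^T W_k vec X = vec(pi(X)).  Combined with (A (x) B) vec X = vec(B X A^T)
   this gives (A (x)_s B) W_n vec X = W_m vec(B pi(X) A^T), and (a)-(d) become
   identities between such expressions.  For (e) and (f): pi(b a^T) = 0 forces
   a = 0 or b = 0, and no matrix space is the union of two proper kernels. *)

Lemma nth_allpairs_pair (T1 T2 : Type) (x0 : T1) (y0 : T2)
    (s1 : seq T1) (s2 : seq T2) i j :
  (i < size s1)%N -> (j < size s2)%N ->
  nth (x0, y0) [seq (a, b) | a <- s1, b <- s2] (i * size s2 + j)
  = (nth x0 s1 i, nth y0 s2 j).
Proof.
elim: s1 i => [//|a s1 IH] [|i] /= lt_i lt_j.
  by rewrite nth_cat size_map lt_j (nth_map y0).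
by rewrite nth_cat size_map mulSn -addnA ltnNge leq_addr /= addKn IH.
Qed.

Lemma mxvec_index_tens m n (i : 'I_m) (j : 'I_n) :
  mxvec_index i j = mxtens_index (i, j).
Proof.
apply: val_inj => /=.
have size_enum : size (enum {: 'I_m * 'I_n}) = (m * n)%N.
  by rewrite -cardE card_prod !card_ord.
have nth_enum_ij : nth (i, j) (enum {: 'I_m * 'I_n}) (i * n + j) = (i, j).
  rewrite enumT unlock /= /prod_enum.
  have := @nth_allpairs_pair _ _ i j (enum 'I_m) (enum 'I_n) i j.
  by rewrite !size_enum_ord !nth_ord_enum => ->.
apply/eqP; rewrite -(nth_uniq (i, j) _ _ (enum_uniq {: 'I_m * 'I_n})) ?size_enum.
- by rewrite nth_enum_rank nth_enum_ij.
- by rewrite -size_enum -cardE ltn_ord.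
- exact: mxtens_index_proof (i, j).
Qed.

Lemma vecE (T : Type) m n (X : 'M[T]_(m, n)) i j (z : 'I_1) :
  vec X (mxtens_index (j, i)) z = X i j.
Proof. by rewrite /vec -mxvec_index_tens mxE [z]ord1 mxvecE mxE. Qed.

Lemma vec_inj (T : Type) m n : injective (@vec T m n).
Proof.
move=> X Y eqXY; apply/matrixP => i j.
by rewrite -(vecE X i j 0) -(vecE Y i j 0) eqXY.
Qed.

Lemma vec0 (F : pzRingType) m n : vec (0 : 'M[F]_(m, n)) = 0.
Proof. by rewrite /vec !linear0. Qed.

Lemma vecD (F : pzRingType) m n (X Y : 'M[F]_(m, n)) : vec (X + Y) = vec X + vec Y.
Proof. by rewrite /vec !linearD. Qed.

Lemma vecZ (F : pzRingType) m n a (X : 'M[F]_(m, n)) : vec (a *: X) = a *: vec X.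
Proof. by rewrite /vec !linearZ. Qed.

Lemma sum_mxtens (F : pzRingType) m n (f : 'I_(m * n) -> F) :
  \sum_(k < m * n) f k = \sum_(i < m) \sum_(j < n) f (mxtens_index (i, j)).
Proof.
rewrite pair_big /= (reindex (@mxtens_index m n)) /=; first by apply: eq_bigr => -[].
by exists (@mxtens_unindex m n) => x _; [apply: mxtens_indexK | apply: mxtens_unindexK].
Qed.

Lemma tensmx_vec (F : comPzRingType) m n p q
    (A : 'M[F]_(m, n)) (B : 'M[F]_(p, q)) (X : 'M[F]_(q, n)) :
  tensmx A B *m vec X = vec (B *m X *m A^T).
Proof.
apply/matrixP => k z; case: (mxtens_indexP k) => i1 i2.
rewrite vecE mxE sum_mxtens mxE.
apply: eq_bigr => a _; rewrite !mxE mulr_suml; apply: eq_bigr => b _.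
by rewrite tensmxE vecE [RHS]mulrC mulrA.
Qed.

Lemma tensmx_cV (F : comPzRingType) n (x y : 'cV[F]_n) : tensmx x y = vec (y *m x^T).
Proof.
apply/matrixP => c z; case: (mxtens_indexP c) => i j.
have -> : z = mxtens_index (ord0, ord0) by apply: val_inj; case: z => -[].
by rewrite tensmxE vecE !mxE big_ord1 !mxE mulrC.
Qed.

Lemma mulmx_cV_ext (F : pzRingType) a k (M N : 'M[F]_(a, k)) :
  (forall u : 'cV_k, M *m u = N *m u) -> M = N.
Proof.
move=> eqMN; apply/matrixP => i j.
have := congr1 (fun v : 'cV_a => v i 0) (eqMN (delta_mx j 0)).
by rewrite -!colE !mxE.
Qed.

Lemma mulmx_eq0_cover (F : pzRingType) m n (A B : 'M[F]_(m, n)) :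
  (forall v : 'cV_n, A *m v = 0 \/ B *m v = 0) -> A = 0 \/ B = 0.
Proof.
move=> cover; have [/eqP -> | /matrix0Pn[i1 [j1 Aij1]]] := boolP (A == 0); first by left.
have [/eqP -> | /matrix0Pn[i2 [j2 Bij2]]] := boolP (B == 0); first by right.
pose v1 : 'cV[F]_n := delta_mx j1 0; pose v2 : 'cV[F]_n := delta_mx j2 0.
have Av1 : A *m v1 != 0 by apply/cV0Pn; exists i1; rewrite -colE mxE.
have Bv2 : B *m v2 != 0 by apply/cV0Pn; exists i2; rewrite -colE mxE.
have Bv1 : B *m v1 = 0 by case: (cover v1) => // eq0; rewrite eq0 eqxx in Av1.
have Av2 : A *m v2 = 0 by case: (cover v2) => // eq0; rewrite eq0 eqxx in Bv2.
case: (cover (v1 + v2)); rewrite mulmxDr.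
  by rewrite Av2 addr0 => eq0; rewrite eq0 eqxx in Av1.
by rewrite Bv1 add0r => eq0; rewrite eq0 eqxx in Bv2.
Qed.

Lemma half_dbl (F : numFieldType) (v : F) : (1 / 2 : F) * (v + v) = v.
Proof. by rewrite mulrDr -mulrDl -splitr mul1r. Qed.

Lemma half_dblmx (F : numFieldType) a b (M : 'M[F]_(a, b)) : (1 / 2 : F) *: (M + M) = M.
Proof. by apply/matrixP => i j; rewrite !mxE half_dbl. Qed.

Lemma triS k : tri k.+1 = (k.+1 + tri k)%N.
Proof.
rewrite /tri; have -> : (k.+1 * k.+2 = k.+1 * 2 + k * k.+1)%N by ring.
by rewrite divnMDl.
Qed.

Lemma size_sym_pairs k : size (sym_pairs k) = tri k.
Proof.
rewrite /sym_pairs size_allpairs_dep.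
suff sumn_iota a len :
    sumn [seq size (iota r (a + len - r)) | r <- iota a len] = tri len.
  by have := sumn_iota 0%N k; rewrite add0n.
elim: len a => [//|len IH] a.
by rewrite /= size_iota addnS subSn ?leq_addr // addKn triS -(IH a.+1) addSn.
Qed.

Lemma mem_sym_pairs k r c : ((r, c) \in sym_pairs k) = (r <= c < k)%N.
Proof.
apply/allpairsPdep/idP => [[x [y [x_in y_in [-> ->]]]] | /andP[le_rc lt_ck]].
  move: x_in y_in; rewrite !mem_iota add0n => /= lt_xk /andP[-> /=].
  by rewrite subnKC // ltnW.
exists r, c; rewrite !mem_iota /= le_rc subnKC ?(leq_ltn_trans le_rc lt_ck) //.
exact: ltnW (leq_ltn_trans le_rc lt_ck).
Qed.

Lemma uniq_sym_pairs k : uniq (sym_pairs k).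
Proof.
apply: allpairs_uniq_dep => [|x _|[? ?] [? ?] _ _ /= [-> ->]] //; exact: iota_uniq.
Qed.

Definition sym_pair k l := nth (0%N, 0%N) (sym_pairs k) l.

Lemma sym_pair_mem k (l : 'I_(tri k)) : sym_pair k l \in sym_pairs k.
Proof. by rewrite mem_nth // size_sym_pairs. Qed.

Lemma minmax_sym_pairs k (i j : 'I_k) : (minn i j, maxn i j) \in sym_pairs k.
Proof.
rewrite mem_sym_pairs; have := ltn_ord i; have := ltn_ord j.
move=> lt_jk lt_ik; apply/andP; split; lia.
Qed.

Lemma sym_index_proof k (i j : 'I_k) :
  (index (minn i j, maxn i j) (sym_pairs k) < tri k)%N.
Proof. by rewrite -size_sym_pairs index_mem minmax_sym_pairs. Qed.

Definition sym_index k (i j : 'I_k) : 'I_(tri k) := Ordinal (sym_index_proof i j).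

Lemma sym_pair_index k (i j : 'I_k) : sym_pair k (sym_index i j) = (minn i j, maxn i j).
Proof. by rewrite /sym_pair nth_index ?minmax_sym_pairs. Qed.

Lemma sym_index_pair k (l : 'I_(tri k)) (i j : 'I_k) :
  sym_pair k l = (minn i j, maxn i j) -> l = sym_index i j.
Proof.
move=> eq_pair; apply: val_inj; rewrite /= -eq_pair /sym_pair index_uniq ?uniq_sym_pairs //.
by rewrite size_sym_pairs.
Qed.

Section SymmetricBasis.
Variables (F : numFieldType) (s : F).

(* [Emat R k l] is [Esym (Num.sqrt 2 / 2) k l] by conversion. *)
Definition Esym k l : 'M[F]_k :=
  let rc := sym_pair k l in
  if rc.1 == rc.2 then
    \matrix_(a, b) (((a : nat) == rc.1) && ((b : nat) == rc.1))%:R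
  else
    s *: \matrix_(a, b) ((((a : nat) == rc.1) && ((b : nat) == rc.2))%:R
                         + (((a : nat) == rc.2) && ((b : nat) == rc.1))%:R).

Lemma EsymE k l (i j : 'I_k) :
  Esym k l i j =
    let rc := sym_pair k l in
    if rc.1 == rc.2 then (((i : nat) == rc.1) && ((j : nat) == rc.1))%:R
    else s * ((((i : nat) == rc.1) && ((j : nat) == rc.2))%:R
              + (((i : nat) == rc.2) && ((j : nat) == rc.1))%:R).
Proof. by rewrite /Esym; case: ifP => _; rewrite !mxE. Qed.

Lemma Esym_sym k l (i j : 'I_k) : Esym k l i j = Esym k l j i.
Proof.
rewrite !EsymE /=; case: ifP => [/eqP ->|_]; first by rewrite andbC.
by rewrite [in LHS]addrC; congr (_ * (_%:R + _%:R)); rewrite andbC.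
Qed.

Lemma Esym_neq0 k (l : 'I_(tri k)) (i j : 'I_k) : Esym k l i j != 0 -> l = sym_index i j.
Proof.
move=> Eij_neq0; apply: sym_index_pair.
move: Eij_neq0 (sym_pair_mem l); rewrite EsymE; case: (sym_pair k l) => r c /=.
rewrite mem_sym_pairs => + /andP[le_rc _].
case: ifP => [/eqP <-|_].
  by case: andP => [[/eqP -> /eqP ->] _|]; rewrite ?minnn ?maxnn ?eqxx.
case: andP => [[/eqP -> /eqP ->] _|_].
  by rewrite (minn_idPl le_rc) (maxn_idPr le_rc).
case: andP => [[/eqP -> /eqP ->] _|_].
  by rewrite (minn_idPr le_rc) (maxn_idPl le_rc).
by rewrite addr0 mulr0 eqxx.
Qed.

Lemma Esym_index k (i j a b : 'I_k) :
  Esym k (sym_index i j) a b =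
    if i == j then ((a == i) && (b == i))%:R
    else s * (((a == i) && (b == j))%:R + ((a == j) && (b == i))%:R).
Proof.
rewrite EsymE sym_pair_index /=.
case: (leqP i j) => [//|lt_ji].
have -> : (nat_of_ord j == nat_of_ord i) = false by apply/eqP; lia.
have -> : (i == j) = false by apply/eqP => eq_ij; move: lt_ji; rewrite eq_ij; lia.
by rewrite addrC.
Qed.

Definition fdot k (E X : 'M[F]_k) := \sum_a \sum_b E a b * X a b.

Lemma sum2_delta_mul k (p q : 'I_k) (X : 'M[F]_k) :
  \sum_a \sum_b ((a == p) && (b == q))%:R * X a b = X p q.
Proof.
rewrite (bigD1 p) //= [X in _ + X]big1 => [|a ne_ap]; last first.
  by rewrite big1 // => b _; rewrite (negbTE ne_ap) mul0r.
rewrite addr0 (bigD1 q) //= big1 => [|b ne_bq]; last by rewrite (negbTE ne_bq) andbF mul0r.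
by rewrite !eqxx mul1r addr0.
Qed.

Lemma fdot_Esym_index k (i j : 'I_k) (X : 'M[F]_k) :
  fdot (Esym k (sym_index i j)) X =
    if i == j then X i i else s * (X i j + X j i).
Proof.
rewrite /fdot; under eq_bigr do under eq_bigr do rewrite Esym_index.
case: (i =P j) => [->|_]; first exact: sum2_delta_mul.
rewrite -!sum2_delta_mul mulrDr !mulr_sumr -big_split; apply: eq_bigr => a _.
by rewrite !mulr_sumr -big_split; apply: eq_bigr => b _; rewrite /= -mulrDr -mulrDl mulrA.
Qed.

Definition smat k (u : 'cV[F]_(tri k)) : 'M[F]_k := \sum_l u l 0 *: Esym k l.

Lemma smat_sym k (u : 'cV[F]_(tri k)) : (smat u)^T = smat u.
Proof.
apply/matrixP => i j; rewrite !mxE !summxE; apply: eq_bigr => l _.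
by rewrite !mxE Esym_sym.
Qed.

Hypothesis s2_half : s * s = 2^-1.

Lemma smat_fdot k (X : 'M[F]_k) : X^T = X -> smat (\col_l fdot (Esym k l) X) = X.
Proof.
move=> symX; apply/matrixP => i j.
rewrite summxE (bigD1 (sym_index i j)) // [X in _ + X = _]big1 => [|l ne_l]; last first.
  rewrite mxE; suff -> : Esym k l i j = 0 by rewrite mulr0.
  by apply/eqP; apply: contraNT ne_l => /Esym_neq0 ->.
rewrite !mxE addr0 fdot_Esym_index Esym_index.
case: eqP => [<-|_]; first by rewrite !eqxx mulr1.
have -> : X j i = X i j by rewrite -[in LHS]symX mxE.
by rewrite !eqxx /= addr0 mulr1 mulrAC s2_half -div1r half_dbl.
Qed.

Definition Wsym k : 'M[F]_(tri k, k * k) := \matrix_(l < tri k) (vec (Esym k l))^T.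

Definition sympart k (X : 'M[F]_k) := (1 / 2 : F) *: (X + X^T).

Lemma sympart_sym k (X : 'M[F]_k) : (sympart X)^T = sympart X.
Proof. by rewrite /sympart linearZ /= linearD /= trmxK addrC. Qed.

Lemma sympart_id k (X : 'M[F]_k) : X^T = X -> sympart X = X.
Proof. by move=> symX; rewrite /sympart symX half_dblmx. Qed.

Lemma WsymE k (l : 'I_(tri k)) (i j : 'I_k) :
  Wsym k l (mxtens_index (j, i)) = Esym k l i j.
Proof. by rewrite /Wsym mxE mxE vecE. Qed.

Lemma Wsym_vec k (X : 'M[F]_k) : Wsym k *m vec X = \col_l fdot (Esym k l) X.
Proof.
apply/matrixP => l z; rewrite !mxE sum_mxtens exchange_big /=.
by apply: eq_bigr => i _; apply: eq_bigr => j _; rewrite WsymE vecE.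
Qed.

Lemma trmx_Wsym_mul k (u : 'cV[F]_(tri k)) : (Wsym k)^T *m u = vec (smat u).
Proof.
apply/matrixP => c z; case: (mxtens_indexP c) => j i.
rewrite vecE !mxE summxE; apply: eq_bigr => l _.
by rewrite mxE WsymE mxE [z]ord1 mulrC.
Qed.

Lemma Wsym_vec_tr k (X : 'M[F]_k) : Wsym k *m vec X^T = Wsym k *m vec X.
Proof.
rewrite !Wsym_vec; apply/matrixP => l z; rewrite !mxE /fdot exchange_big /=.
by apply: eq_bigr => i _; apply: eq_bigr => j _; rewrite mxE Esym_sym.
Qed.

Lemma Wsym_vec_sympart k (X : 'M[F]_k) : Wsym k *m vec (sympart X) = Wsym k *m vec X.
Proof.
by rewrite /sympart vecZ vecD -scalemxAr mulmxDr Wsym_vec_tr half_dblmx.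
Qed.

Lemma trmx_Wsym_Wsym_vec k (X : 'M[F]_k) :
  (Wsym k)^T *m (Wsym k *m vec X) = vec (sympart X).
Proof. by rewrite -Wsym_vec_sympart Wsym_vec trmx_Wsym_mul smat_fdot ?sympart_sym. Qed.

Lemma Wsym_vec_eq0 k (X : 'M[F]_k) : Wsym k *m vec X = 0 -> sympart X = 0.
Proof.
move=> /(congr1 (mulmx (Wsym k)^T)); rewrite trmx_Wsym_Wsym_vec mulmx0 -(vec0 F k k).
exact: vec_inj.
Qed.

End SymmetricBasis.

Section SymmetricKronecker.
Variables (F : numFieldType) (s : F).

Definition skronW m n (A B : 'M[F]_(m, n)) : 'M[F]_(tri m, tri n) :=
  Wsym s m *m tensmx A B *m (Wsym s n)^T.

Lemma skronW_mul m n (A B : 'M[F]_(m, n)) (u : 'cV[F]_(tri n)) :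
  skronW A B *m u = Wsym s m *m vec (B *m smat s u *m A^T).
Proof. by rewrite /skronW -2!mulmxA trmx_Wsym_mul tensmx_vec. Qed.

Lemma skronWC m n (A B : 'M[F]_(m, n)) : skronW A B = skronW B A.
Proof.
apply: mulmx_cV_ext => u; rewrite !skronW_mul -Wsym_vec_tr.
by rewrite !trmx_mul trmxK smat_sym mulmxA.
Qed.

Lemma trmx_skronW m n (A B : 'M[F]_(m, n)) : (skronW A B)^T = skronW A^T B^T.
Proof. by rewrite /skronW !trmx_mul trmxK trmx_tens mulmxA. Qed.

Hypothesis s2_half : s * s = 2^-1.

Lemma skronW_Wsym_vec m n (A B : 'M[F]_(m, n)) (X : 'M[F]_n) :
  skronW A B *m (Wsym s n *m vec X) = Wsym s m *m vec (B *m sympart X *m A^T).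
Proof. by rewrite /skronW -!mulmxA trmx_Wsym_Wsym_vec // tensmx_vec mulmxA. Qed.

Lemma skronW_mulmx m n p (A B : 'M[F]_(m, n)) (C D : 'M[F]_(n, p)) :
  skronW A B *m skronW C D
  = (1 / 2 : F) *: (skronW (A *m C) (B *m D) + skronW (A *m D) (B *m C)).
Proof.
apply: mulmx_cV_ext => u.
rewrite -mulmxA [skronW C D *m u]skronW_mul skronW_Wsym_vec // -scalemxAl mulmxDl !skronW_mul.
have symY := smat_sym s u; set Y := smat s u in symY *.
rewrite /sympart -scalemxAr -scalemxAl vecZ -scalemxAr; congr (_ *: _).
rewrite mulmxDr mulmxDl vecD mulmxDr; congr (_ + _); congr (_ *m vec _).
  by rewrite !trmx_mul !mulmxA.
by rewrite !trmx_mul symY trmxK !mulmxA.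
Qed.

Lemma sympart_outer_eq0 k (a b : 'cV[F]_k) : sympart (b *m a^T) = 0 -> a = 0 \/ b = 0.
Proof.
rewrite /sympart trmx_mul trmxK => /eqP; rewrite scaler_eq0 mul1r invr_eq0 pnatr_eq0 /=.
move=> /eqP sum_eq0.
have [/eqP -> | /cV0Pn[i a_i]] := boolP (a == 0); [by left | right].
have outerE p q : b p 0 * a q 0 + a p 0 * b q 0 = 0.
  by have := congr1 (fun M : 'M_k => M p q) sum_eq0; rewrite !mxE !big_ord1 !mxE.
have b_i : b i 0 = 0.
  have /eqP := outerE i i; rewrite [b i 0 * _]mulrC -mulr2n mulrn_eq0 /=.
  by rewrite mulf_eq0 (negbTE a_i) => /eqP.
apply/matrixP => j z; rewrite [z]ord1 mxE.
have /eqP := outerE j i; rewrite b_i mulr0 addr0 mulf_eq0 (negbTE a_i) orbF.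
by move/eqP.
Qed.

Lemma skronW_eq0 m n (A B : 'M[F]_(m, n)) : skronW A B = 0 <-> A = 0 \/ B = 0.
Proof.
split=> [skron_eq0|]; last by case=> ->; rewrite /skronW ?tens0mx ?tensmx0 mulmx0 mul0mx.
apply: mulmx_eq0_cover => v.
have : sympart (B *m sympart (v *m v^T) *m A^T) = 0.
  by apply: (Wsym_vec_eq0 s2_half); rewrite -skronW_Wsym_vec // skron_eq0 mul0mx.
have -> : B *m sympart (v *m v^T) *m A^T = (B *m v) *m (A *m v)^T.
  by rewrite sympart_id ?trmx_mul ?trmxK // !mulmxA.
by case/sympart_outer_eq0; [left | right].
Qed.

Lemma skronW_eigen n (A B : 'M[F]_n) (x y : 'cV[F]_n) (l1 m1 l2 m2 : F) :
  x != 0 -> y != 0 ->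
  A *m x = l1 *: x -> B *m x = m1 *: x -> A *m y = l2 *: y -> B *m y = m2 *: y ->
  Wsym s n *m tensmx x y != 0 /\
  skronW A B *m (Wsym s n *m tensmx x y)
  = ((1 / 2) * (l1 * m2 + l2 * m1)) *: (Wsym s n *m tensmx x y).
Proof.
move=> x_neq0 y_neq0 Ax Bx Ay By; rewrite tensmx_cV; split.
  apply/eqP => /(Wsym_vec_eq0 s2_half) /sympart_outer_eq0[] eq0.
    by rewrite eq0 eqxx in x_neq0.
  by rewrite eq0 eqxx in y_neq0.
rewrite skronW_Wsym_vec //.
have -> : B *m sympart (y *m x^T) *m A^T
    = (1 / 2) *: ((l1 * m2) *: (y *m x^T) + (l2 * m1) *: (y *m x^T)^T).
  rewrite /sympart -scalemxAr -scalemxAl; congr (_ *: _).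
  rewrite mulmxDr mulmxDl trmx_mul trmxK !mulmxA -2![_ *m _^T *m A^T]mulmxA -!trmx_mul.
  by rewrite By Bx Ax Ay !linearZ /= -!scalemxAl !scalerA.
by rewrite vecZ vecD !vecZ -!scalemxAr mulmxDr -!scalemxAr Wsym_vec_tr -scalerDl scalerA.
Qed.

End SymmetricKronecker.

Lemma sqrt2_half_sqr (R : rcfType) : (Num.sqrt 2 / 2 : R) * (Num.sqrt 2 / 2) = 2^-1.
Proof.
rewrite mulrACA -expr2 sqr_sqrtr ?ler0n // mulrA mulfV ?mul1r //.
by rewrite pnatr_eq0.
Qed.

Lemma WmatC_Wsym (R : rcfType) k :
  WmatC R k = Wsym (real_complex R (Num.sqrt 2 / 2 : R)) k.
Proof.
apply/matrixP => l c; case: (mxtens_indexP c) => j i.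
rewrite /WmatC mxE !WsymE !EsymE /=; case: ifP => _; first by rewrite rmorph_nat.
by rewrite rmorphM rmorphD !rmorph_nat.
Qed.

Theorem proposition3 (R : rcfType) (m n p : nat) :
  (* (a) symmetry *)
  (forall A B : 'M[R]_(m, n), skron A B = skron B A) /\
  (* (b) mixed vector product *)
  (forall (A B : 'M[R]_(m, n)) (C : 'M[R]_n),
      skron A B *m svec (symp C) = svec (symp (B *m symp C *m A^T))) /\
  (* (c) transpose *)
  (forall A B : 'M[R]_(m, n), (skron A B)^T = skron A^T B^T) /\
  (* (d) mixed products *)
  (forall (A B : 'M[R]_(m, n)) (C D : 'M[R]_(n, p)),
      skron A B *m skron C D
      = (1 / 2 : R) *: (skron (A *m C) (B *m D) + skron (A *m D) (B *m C))) /\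
  (forall (A B : 'M[R]_(m, n)) (C : 'M[R]_(n, p)),
      skron A B *m skron C C = skron (A *m C) (B *m C)) /\
  (forall (A B : 'M[R]_(m, n)) (C : 'M[R]_(p, m)),
      skron C C *m skron A B = skron (C *m A) (C *m B)) /\
  (* (e) shared eigenvectors *)
  (forall (A B : 'M[R]_n) (x y : 'cV[R[i]]_n) (l1 m1 l2 m2 : R[i]),
      x != 0 -> y != 0 ->
      map_mx (real_complex R) A *m x = l1 *: x ->
      map_mx (real_complex R) B *m x = m1 *: x ->
      map_mx (real_complex R) A *m y = l2 *: y ->
      map_mx (real_complex R) B *m y = m2 *: y ->
      svkronC x y != 0 /\
      skronC (map_mx (real_complex R) A) (map_mx (real_complex R) B) *m svkronC x y
      = ((1 / 2) * (l1 * m2 + l2 * m1)) *: svkronC x y) /\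
  (* (f) zero *)
  (forall A B : 'M[R]_(m, n), skron A B = 0 <-> A = 0 \/ B = 0).
Proof.
pose s : R := Num.sqrt 2 / 2.
have s2_half : s * s = 2^-1 := sqrt2_half_sqr R.
have sC2_half : real_complex R s * real_complex R s = 2^-1.
  by rewrite -rmorphM s2_half fmorphV rmorph_nat.
have skronE m' n' (A B : 'M[R]_(m', n')) : skron A B = skronW s A B by [].
have svecE n' (X : 'M[R]_n') : svec X = Wsym s n' *m vec X by [].
have sympE n' (X : 'M[R]_n') : symp X = sympart X by [].
split=> [A B|]; first by rewrite !skronE skronWC.
split=> [A B C|].
  rewrite skronE !svecE !sympE skronW_Wsym_vec // (sympart_id (sympart_sym C)).
  by rewrite Wsym_vec_sympart.
split=> [A B|]; first by rewrite !skronE trmx_skronW.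
split=> [A B C D|]; first by rewrite !skronE skronW_mulmx.
split=> [A B C|]; first by rewrite !skronE skronW_mulmx // half_dblmx.
split=> [A B C|].
  by rewrite !skronE skronW_mulmx // [skronW _ (C *m B) _]skronWC half_dblmx.
split=> [A B x y l1 m1 l2 m2 x_neq0 y_neq0 Ax Bx Ay By|A B].
  by rewrite /svkronC /skronC WmatC_Wsym; apply: skronW_eigen.
by rewrite skronE; apply: skronW_eq0.
Qed.
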